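(* For every word $\omega\in[n]^*$ and every $j\in[n]$: (1) $a^j_\omega-e_j\in B_\omega$; (2) $M_\omega a^j_\omega=u_\omega+e_j\in e_j+M_\omega B_\omega$; (3) $a^j_\omega\in\delta^j_\omega+B_\omega$.
   Context: Let $[n]=\{1,\dots,n\}$, $e_1,\dots,e_n$ the standard basis of $\mathbb{Z}^n$; $\varepsilon$ is the empty word, $*$ concatenation. For words $\omega$ over $[n]$ define recursively $a^i_\omega,\delta^i_\omega\in\mathbb{Z}^n$: $a^i_\varepsilon=\delta^i_\varepsilon=e_i$; $a^i_{\omega*j}=a^i_\omega$ if $i\ne j$, $a^j_{\omega*j}=a^j_\omega+\delta^j_\omega$; $\delta^j_{\omega*j}=\delta^j_\omega$, $\delta^i_{\omega*j}=\delta^i_\omega-\delta^j_\omega$ for $i\ne j$. Let $B_\varepsilon=\{0\}$, $B_{\omega*j}=B_\omega+\{0,\delta^j_\omega\}$ (Minkowski sum). Let $M_\omega=(\delta^1_\omega\ \cdots\ \delta^n_\omega)^{-1}$ (inverse of the matrix with columns $\delta^i_\omega$). For $k\in[n]$ let $D^k=\mathrm{id}+e_k(\mathbb{1}-e_k)^T$ with $\mathbb{1}=(1,\dots,1)^T$. Define $u_\varepsilon=0$, $u_{\omega*j}=e_j+D^j u_\omega$. *)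

(* Vectors of Z^n are column vectors 'cV[int]_n; words over [n]
   are sequences of 'I_n (index i of [n] is the ordinal i-1); w*j is rcons w j. *)
From HB Require Import structures.
From mathcomp Require Import all_boot all_order all_algebra.
Set Implicit Arguments. Unset Strict Implicit. Unset Printing Implicit Defensive.
Import Order.TTheory GRing.Theory Num.Theory.
Local Open Scope ring_scope.

Section Defs.
Variable n : nat.

Definition ev (i : 'I_n) : 'cV[int]_n := delta_mx i 0.

Definition onev : 'cV[int]_n := const_mx 1.

Definition Dmx (k : 'I_n) : 'M[int]_n := 1%:M + ev k *m (onev - ev k)^T.

(* state after reading a word: (a, delta, B, u) *)
Definition state := (('I_n -> 'cV[int]_n) * ('I_n -> 'cV[int]_n)
                     * seq 'cV[int]_n * 'cV[int]_n)%type.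

Definition init_state : state := (ev, ev, [:: 0], 0).

Definition step (st : state) (j : 'I_n) : state :=
  let: (a, d, B, u) := st in
  ((fun i => if i == j then a j + d j else a i),
   (fun i => if i == j then d j else d i - d j),
   [seq b + c | b <- B, c <- [:: 0; d j]],
   ev j + Dmx j *m u).

Definition run (w : seq 'I_n) : state := foldl step init_state w.

Definition avec (w : seq 'I_n) (i : 'I_n) : 'cV[int]_n := (run w).1.1.1 i.
Definition dvec (w : seq 'I_n) (i : 'I_n) : 'cV[int]_n := (run w).1.1.2 i.
Definition Bset (w : seq 'I_n) : seq 'cV[int]_n := (run w).1.2.
Definition uvec (w : seq 'I_n) : 'cV[int]_n := (run w).2.

Definition Delta (w : seq 'I_n) : 'M[int]_n := \matrix_(r, c) dvec w c r 0.
Definition Mmx (w : seq 'I_n) : 'M[int]_n := invmx (Delta w).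

End Defs.

From HB Require Import structures.
From mathcomp Require Import all_boot all_order all_algebra.
Set Implicit Arguments. Unset Strict Implicit. Unset Printing Implicit Defensive.
Import Order.TTheory GRing.Theory Num.Theory.
Local Open Scope ring_scope.

(* Everything is proved by induction on the word, read from the right
   (w * k = rcons w k), after unfolding one letter of the automaton.
   - Parts (1) and (3) are pure bookkeeping: B_{w*k} = B_w + {0, delta^k_w}
     contains B_w and delta^k_w + B_w, which is exactly what is needed to
     follow a^j and a^j - delta^j through one step.
   - Part (2) rests on the linear-algebra identity  a^j_w = delta^j_w + Delta_w u_w,
     where Delta_w has columns delta^i_w.  Reading a letter k multiplies Delta
     on the right by 1 - N_k, where N_k = e_k (1 - e_k)^T squares to zero, so
     D^k = 1 + N_k is its inverse.  Hence Delta_w stays invertible (so M_w is a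
     true inverse) and Delta_{w*k} u_{w*k} = delta^k_w + Delta_w u_w, which
     propagates the identity.  Multiplying by M_w = Delta_w^-1 gives
     M_w a^j_w = e_j + u_w, and combined with part (3) also e_j + M_w b. *)

Lemma rank_one_sqr0 (R : pzRingType) (m : nat) (u v : 'cV[R]_m) :
  v^T *m u = 0 -> (u *m v^T) *m (u *m v^T) = 0.
Proof. by move=> vu0; rewrite mulmxA -[u *m v^T *m u]mulmxA vu0 mulmx0 mul0mx. Qed.

Lemma sqr0_unipotent_inv (R : pzRingType) (m : nat) (N : 'M[R]_m) :
  N *m N = 0 -> (1%:M - N) *m (1%:M + N) = 1%:M.
Proof. by move=> NN0; rewrite mulmxBl mul1mx mulmxDr mulmx1 NN0 addr0 addrK. Qed.

Section Automaton.
Variable n : nat.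
Implicit Types (w : seq 'I_n) (i j k : 'I_n).

Lemma run_rcons w k : run (rcons w k) = step (run w) k.
Proof. by rewrite /run foldl_rcons. Qed.

Lemma avec_rcons w k i :
  avec (rcons w k) i = if i == k then avec w k + dvec w k else avec w i.
Proof. by rewrite /avec /dvec run_rcons; case: (run w) => [[[a d] B] u]. Qed.

Lemma dvec_rcons w k i :
  dvec (rcons w k) i = if i == k then dvec w k else dvec w i - dvec w k.
Proof. by rewrite /dvec run_rcons; case: (run w) => [[[a d] B] u]. Qed.

Lemma Bset_rcons w k :
  Bset (rcons w k) = [seq b + c | b <- Bset w, c <- [:: 0; dvec w k]].
Proof. by rewrite /Bset /dvec run_rcons; case: (run w) => [[[a d] B] u]. Qed.

Lemma uvec_rcons w k : uvec (rcons w k) = ev k + Dmx k *m uvec w.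
Proof. by rewrite /uvec run_rcons; case: (run w) => [[[a d] B] u]. Qed.

Lemma Bset_rcons_id w k b : b \in Bset w -> b \in Bset (rcons w k).
Proof.
move=> bB; rewrite Bset_rcons -[b]addr0.
by apply: (allpairs_f (fun x y => x + y)); rewrite ?inE ?eqxx.
Qed.

Lemma Bset_rcons_shift w k b : b \in Bset w -> dvec w k + b \in Bset (rcons w k).
Proof.
move=> bB; rewrite Bset_rcons addrC.
by apply: (allpairs_f (fun x y => x + y)); rewrite ?inE ?eqxx ?orbT.
Qed.

Lemma avec_sub_ev_in_Bset w j : avec w j - ev j \in Bset w.
Proof.
elim/last_ind: w j => [|w k IH] j; first by rewrite /avec /Bset /= subrr inE.
rewrite avec_rcons; case: eqP => [->|_]; last exact: Bset_rcons_id.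
by rewrite addrAC addrC; apply: Bset_rcons_shift.
Qed.

Lemma avec_in_dvec_Bset w j : exists2 b, b \in Bset w & avec w j = dvec w j + b.
Proof.
elim/last_ind: w j => [|w k IH] j; first by exists 0; rewrite ?inE ?addr0.
rewrite avec_rcons dvec_rcons; case: ifP => _.
  have [b bB ->] := IH k.
  by exists (dvec w k + b); [apply: Bset_rcons_shift | rewrite addrC].
have [b bB ->] := IH j.
by exists (dvec w k + b); [apply: Bset_rcons_shift | rewrite addrA subrK].
Qed.

Definition Nmx k : 'M[int]_n := ev k *m (onev n - ev k)^T.

(* (1 - e_k)^T e_k = 0, so N_k squares to zero. *)
Lemma Nmx_sqr k : Nmx k *m Nmx k = 0.
Proof.
apply: rank_one_sqr0; apply/matrixP => r c; rewrite !mxE big1 // => i _.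
by rewrite !mxE !ord1 !eqxx !andbT; case: (i == k); rewrite ?subrr ?mul0r ?mulr0.
Qed.

Lemma Nmx_inv k : (1%:M - Nmx k) *m Dmx k = 1%:M.
Proof. exact/sqr0_unipotent_inv/Nmx_sqr. Qed.

Lemma Delta_ev w i : Delta w *m ev i = dvec w i.
Proof. by rewrite /ev -colE; apply/matrixP => r c; rewrite !mxE ord1. Qed.

Lemma Delta_nil : Delta [::] = 1%:M :> 'M[int]_n.
Proof. by apply/matrixP => r c; rewrite !mxE /dvec /= eqxx andbT. Qed.

Lemma Delta_rcons w k : Delta (rcons w k) = Delta w *m (1%:M - Nmx k).
Proof.
apply/matrixP => r c.
rewrite mulmxBr mulmx1 /Nmx mulmxA Delta_ev !mxE big_ord1 !mxE dvec_rcons.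
case: eqVneq => [->|_]; first by rewrite eqxx subrr mulr0 subr0.
by rewrite !mxE subr0 mulr1.
Qed.

(* Delta_w is a product of invertible matrices, so M_w is its true inverse. *)
Lemma Delta_unit w : Delta w \in unitmx.
Proof.
elim/last_ind: w => [|w k IH]; first by rewrite Delta_nil unitmx1.
rewrite Delta_rcons unitmx_mul IH.
by have [] := mulmx1_unit (Nmx_inv k).
Qed.

Lemma avec_Delta_uvec w j : avec w j = dvec w j + Delta w *m uvec w.
Proof.
elim/last_ind: w j => [|w k IH] j; first by rewrite /uvec /= mulmx0 addr0.
have Du_rcons : Delta (rcons w k) *m uvec (rcons w k)
                = dvec w k + Delta w *m uvec w.
  rewrite uvec_rcons mulmxDr Delta_ev dvec_rcons eqxx Delta_rcons.
  by rewrite -mulmxA [(1%:M - _) *m _]mulmxA Nmx_inv mul1mx.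
rewrite Du_rcons avec_rcons dvec_rcons.
by case: ifP => _; rewrite IH addrA ?subrK // addrAC.
Qed.

Lemma Mmx_Delta w p (v : 'M[int]_(n, p)) : Mmx w *m (Delta w *m v) = v.
Proof. by rewrite /Mmx mulKmx ?Delta_unit. Qed.

Lemma Mmx_dvec w i : Mmx w *m dvec w i = ev i.
Proof. by rewrite -Delta_ev Mmx_Delta. Qed.

End Automaton.

Theorem mainTheorem8 (n : nat) (w : seq 'I_n) (j : 'I_n) :
  [/\ avec w j - ev j \in Bset w,
      Mmx w *m avec w j = uvec w + ev j
      /\ (exists2 b, b \in Bset w & uvec w + ev j = ev j + Mmx w *m b)
    & exists2 b, b \in Bset w & avec w j = dvec w j + b].
Proof.
have Ma : Mmx w *m avec w j = uvec w + ev j.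
  by rewrite avec_Delta_uvec mulmxDr Mmx_dvec Mmx_Delta addrC.
have [b bB a_eq] := avec_in_dvec_Bset w j.
split; [exact: avec_sub_ev_in_Bset | split=> // | by exists b].
by exists b => //; rewrite -Ma a_eq mulmxDr Mmx_dvec.
Qed.
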